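(* Let $U$ be a nonempty finite set, $R\subseteq U\times U$ serial and transitive, and $cl$ the closure operator of the matroid $M(Reg(U,R))$. Then for every $e\in U\setminus\bigcup\mathcal{A}(Reg(U,R))$, $cl(\{e\})=\{e\}$.
   Context: $R_s(x)=\{y\in U\mid xRy\}$; $\underline{R}(X)=\{x\mid R_s(x)\subseteq X\}$, $\overline{R}(X)=\{x\mid R_s(x)\cap X\neq\emptyset\}$; $X$ is regular if $X=\underline{R}(\overline{R}(X))$, and $Reg(U,R)$ is the lattice of regular sets under inclusion, with least element $\emptyset$. $\mathcal{A}(Reg(U,R))$ is the set of atoms (elements covering $\emptyset$) of this lattice. $h(A)$ is the length of a maximal chain in $[\emptyset,A]$. $M(Reg(U,R))$ is the matroid on $U$ with independent sets $\{X\subseteq U\mid h(Y)\ge|X\cap Y|\ \forall Y\in Reg(U,R)\}$, rank function $r(X)=\max\{|I|\mid I\subseteq X \text{ independent}\}$, and closure operator $cl(X)=\{u\in U\mid r(X\cup\{u\})=r(X)\}$. *)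

From mathcomp Require Import all_boot.
Set Implicit Arguments. Unset Strict Implicit. Unset Printing Implicit Defensive.

Section RoughMatroid.
Variables (T : finType) (R : rel T).

Definition Rs (x : T) : {set T} := [set y | R x y].
Definition lowerR (X : {set T}) : {set T} := [set x | Rs x \subset X].
Definition upperR (X : {set T}) : {set T} := [set x | Rs x :&: X != set0].
Definition regular (X : {set T}) : bool := X == lowerR (upperR X).

Definition atom (A : {set T}) : bool :=
  [&& regular A, A != set0 &
      [forall B : {set T}, (regular B && (B \proper A)) ==> (B == set0)]].
Definition atoms_union : {set T} := \bigcup_(A | atom A) A.

Definition reg_chain_to (A : {set T}) (k : nat) : bool :=
  [exists c : k.+1.-tuple {set T},
     [&& nth set0 c 0 == set0, nth set0 c k == A, all regular c &
         [forall i : 'I_k, nth set0 c i \proper nth set0 c i.+1]]].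

(* h(A): length of a maximal chain in [set0, A] (taken as the maximum
   length; strict chains have length at most #|T|) *)
Definition h (A : {set T}) : nat :=
  \max_(k < #|T|.+1 | reg_chain_to A k) k.

Definition indep (X : {set T}) : bool :=
  [forall Y : {set T}, regular Y ==> (#|X :&: Y| <= h Y)].

Definition rank (X : {set T}) : nat :=
  \max_(I : {set T} | (I \subset X) && indep I) #|I|.

Definition cl (X : {set T}) : {set T} :=
  [set u | rank (u |: X) == rank X].

End RoughMatroid.

From mathcomp Require Import all_boot.
Set Implicit Arguments. Unset Strict Implicit. Unset Printing Implicit Defensive.

(* The argument is a lower bound on the height function h.  For serial R the
   empty set is regular, so every nonempty regular Y carries the chain
   set0 < Y and h(Y) >= 1; if moreover Y is not an atom, some regular B sits
   strictly between set0 and Y, giving the chain set0 < B < Y and h(Y) >= 2.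
   A regular Y containing e is never an atom, hence for every u <> e the pair
   {u, e} meets each regular Y in at most h(Y) points, i.e. it is independent.
   Then rank {u, e} = 2 > 1 >= rank {e}, so u is not in cl({e}); and e is in
   cl({e}) trivially. *)

Section HeightBounds.
Variables (T : finType) (R : rel T).
Hypothesis serial : forall x : T, exists y : T, R x y.

(* For a serial relation every successor neighbourhood is nonempty, so the
   empty set is regular: it is the bottom of every chain of regular sets. *)
Lemma regular_set0 : regular R set0.
Proof.
apply/eqP/setP => x; rewrite !inE.
have -> : upperR R set0 = set0 by apply/setP => z; rewrite !inE setI0 eqxx.
rewrite subset0; apply/esym/negP => /eqP Rs_x0.
have [y Rxy] := serial x.
have : y \in Rs R x by rewrite inE.
by rewrite Rs_x0 inE.
Qed.

Lemma chain_le_h (Y : {set T}) (k : nat) :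
  k <= #|T| -> reg_chain_to R Y k -> k <= h R Y.
Proof.
move=> k_le chain; rewrite /h -ltnS in k_le.
exact: (@leq_bigmax_cond _ (fun i : 'I_#|T|.+1 => reg_chain_to R Y i)
          (fun i => nat_of_ord i) (Ordinal k_le)).
Qed.

Lemma h_nonempty_ge1 (Y : {set T}) : regular R Y -> Y != set0 -> 1 <= h R Y.
Proof.
move=> regY Y_neq0; apply: chain_le_h.
  by have /set0Pn [y yY] := Y_neq0; apply/card_gt0P; exists y.
apply/existsP; exists [tuple set0; Y] => /=.
rewrite !eqxx regY regular_set0 /=.
by apply/forallP => -[[|//] ?] /=; rewrite proper0.
Qed.

Lemma h_nonatom_ge2 (Y : {set T}) :
  regular R Y -> Y != set0 -> ~~ atom R Y -> 2 <= h R Y.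
Proof.
move=> regY Y_neq0; rewrite /atom regY Y_neq0 /= negb_forall.
case/existsP => B; rewrite negb_imply => /andP [/andP [regB BY] B_neq0].
apply: chain_le_h.
  have B_gt0 : 0 < #|B| by have /set0Pn [b bB] := B_neq0; apply/card_gt0P; exists b.
  exact: leq_trans (leq_ltn_trans B_gt0 (proper_card BY)) (max_card _).
apply/existsP; exists [tuple set0; B; Y] => /=.
rewrite !eqxx regY regB regular_set0 /=.
by apply/forallP => -[[|[|//]] ?] /=; rewrite ?proper0.
Qed.

(* A pair {u, e} with e outside every atom is independent: a regular Y
   containing both points contains e, so is not an atom and has h(Y) >= 2. *)
Lemma indep_pair_nonatom (u e : T) :
  e \notin atoms_union R -> indep R [set u; e].
Proof.
move=> e_out; apply/forallP => Y; apply/implyP => regY.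
have [-> //|meet_gt0] := posnP #|[set u; e] :&: Y|.
have Y_neq0 : Y != set0.
  by apply: contraTneq meet_gt0 => ->; rewrite setI0 cards0.
have [meet_le1|meet_gt1] := leqP #|[set u; e] :&: Y| 1.
  exact: leq_trans meet_le1 (h_nonempty_ge1 regY Y_neq0).
have pair_le2 : #|[set u; e]| <= 2 by rewrite cards2; case: (u != e).
have pair_sub : [set u; e] \subset Y.
  have : [set u; e] :&: Y == [set u; e].
    by rewrite eqEcard subsetIl (leq_trans pair_le2 meet_gt1).
  by move/eqP/setIidPl.
have Y_nonatom : ~~ atom R Y.
  apply: contra e_out => atomY; apply/bigcupP; exists Y => //.
  by apply: (subsetP pair_sub); rewrite !inE eqxx orbT.
apply: leq_trans (h_nonatom_ge2 regY Y_neq0 Y_nonatom).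
exact: leq_trans (subset_leq_card (subsetIl _ _)) pair_le2.
Qed.

End HeightBounds.

Lemma rank_le_card (T : finType) (R : rel T) (X : {set T}) : rank R X <= #|X|.
Proof. by apply/bigmax_leqP => I /andP [IX _]; apply: subset_leq_card. Qed.

Lemma indep_le_rank (T : finType) (R : rel T) (X I : {set T}) :
  I \subset X -> indep R I -> #|I| <= rank R X.
Proof.
move=> IX indI.
exact: (@leq_bigmax_cond _ (fun J : {set T} => (J \subset X) && indep R J)
          (fun J => #|J|) I (introT andP (conj IX indI))).
Qed.

Theorem proposition5 (T : finType) (R : rel T)
  (hne : 0 < #|T|)
  (hserial : forall x : T, exists y : T, R x y)
  (htrans : transitive R)
  (e : T) (he : e \notin atoms_union R) :
  cl R [set e] = [set e].
Proof.
apply/setP => u; rewrite !inE.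
have [-> | u_neq_e] := eqVneq u e; first by rewrite setUid eqxx.
apply/negbTE/eqP => same_rank.
have rank_pair : 2 <= rank R [set u; e].
  have <- : #|[set u; e]| = 2 by rewrite cards2 u_neq_e.
  exact: indep_le_rank (subxx _) (indep_pair_nonatom hserial u he).
have := rank_le_card R [set e].
by rewrite -same_rank cards1 leqNgt rank_pair.
Qed.
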